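(* Let $\mathcal G=((V,E),(V_1,V_2,V_\Diamond),\delta,w)$ be a stochastic game and $\varphi$ a bounded prefix-independent objective. Consider the classes of the expected value vector $\mathsf r^*=(\mathbb{E}_v(\varphi))_{v\in V}$, and suppose exactly $m\ge1$ of them contain boundary vertices. Index the classes as $C_1,\dots,C_k$ so that $C_1,\dots,C_m$ are those containing boundary vertices, in increasing order of value, and $C_{m+1},\dots,C_k$ are those without boundary vertices, in increasing order of value. For $1\le i\le m$ fix a boundary vertex $u_i$ of $C_i$ and for $1\le j\le k$ let $p_{i,j}=\sum_{v'\in E(u_i)\cap C_j}\delta(u_i)(v')$. Let $Q_B=(p_{i,j})_{1\le i,j\le m}$, $I$ the $m\times m$ identity matrix, $\alpha$ the least common multiple of the denominators of the $p_{i,j}$ ($1\le i\le m$, $1\le j\le k$), and $D=\det(\alpha(I-Q_B))$. Let $N$ be the maximum denominator (in lowest terms) of the probabilities $\delta(v)(v')$ occurring in $\mathcal G$. Then $D$ is an integer and $|D|\le(2\alpha)^m\le 2^{|V|}\cdot N^{|V|^3}$.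
   Context: A stochastic game is $\mathcal{G}=((V,E),(V_1,V_2,V_\Diamond),\delta,w)$: a finite directed graph $(V,E)$ in which every vertex $v$ has a nonempty out-neighbour set $E(v)$, a partition of $V$ into Player 1, Player 2 and probabilistic vertices, a function $\delta$ giving each $v\in V_\Diamond$ a rational probability distribution $\delta(v)$ on $E(v)$, positive on every out-neighbour, and payoffs $w:E\to\mathbb{Q}$. Plays are infinite paths; deterministic strategies of Player $i$ map finite prefixes ending in $V_i$ to an out-neighbour of the last vertex; a strategy pair and initial vertex induce a probability measure on plays. An objective $\varphi$ is a Borel-measurable real function on plays; bounded if $|\varphi|\le W_\varphi$ for an integer $W_\varphi$; prefix-independent if plays with a common suffix get equal value. $\mathbb{E}_v(\varphi)=\sup_{\sigma_1}\inf_{\sigma_2}\mathbb{E}^{\sigma_1,\sigma_2}_v[\varphi]=\inf_{\sigma_2}\sup_{\sigma_1}\mathbb{E}^{\sigma_1,\sigma_2}_v[\varphi]$ (Player 1 maximises, Player 2 minimises). For a real vector $\mathsf r$ indexed by $V$, its classes are the maximal nonempty sets of vertices on which $\mathsf r$ is constant (the constant being the class value); a vertex $v$ of class $C$ is a boundary vertex if $v\in V_\Diamond$ and $E(v)\not\subseteq C$. *)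

From HB Require Import structures.
From mathcomp Require Import all_boot all_order all_algebra.
From mathcomp Require Import all_classical all_reals all_analysis.

Unset Printing Implicit Defensive.

Import Order.TTheory GRing.Theory Num.Theory.
Local Open Scope classical_set_scope.
Local Open Scope ring_scope.

Inductive player := Player1 | Player2 | Random.

Record game (V : finType) := Game {
  edge  : rel V;
  owner : V -> player;
  delta : V -> V -> rat;       (* δ(v)(v'), meaningful for v ∈ V_◇ *)
  payoff : V -> V -> rat
}.
Arguments edge {V}.
Arguments owner {V}.
Arguments delta {V}.
Arguments payoff {V}.

Definition is_random {V : finType} (G : game V) (v : V) : bool :=
  if owner G v is Random then true else false.

Definition wf_game {V : finType} (G : game V) : Prop :=
  (forall v, exists v', edge G v v') /\
  (forall v, owner G v = Random ->
     (forall v', edge G v v' -> 0 < delta G v v') /\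
     (forall v', ~~ edge G v v' -> delta G v v' = 0) /\
     \sum_(v' | edge G v v') delta G v v' = 1).

Definition is_play {V : finType} (G : game V) (pi : nat -> V) : Prop :=
  forall n, edge G (pi n) (pi n.+1).

(* deterministic strategies: [sigma h x] is the successor chosen after the
   finite prefix [rcons h x] (history [h], last vertex [x]). *)
Definition strat (V : finType) := seq V -> V -> V.

Definition is_strategy {V : finType} (G : game V) (i : player)
  (sigma : strat V) : Prop :=
  forall h x, owner G x = i -> edge G x (sigma h x).

(* (nat -> V with the σ-algebra generated by cylinders, i.e. the       *)
(*  product/Borel σ-algebra; the point v0 only serves to make the      *)
(*  carrier a pointedType).                                            *)
Section PlaysType.
Variables (V : finType) (v0 : V).
Definition Plays of V := nat -> V.
HB.instance Definition _ := gen_eqMixin (Plays v0).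
HB.instance Definition _ := gen_choiceMixin (Plays v0).
HB.instance Definition _ := isPointed.Build (Plays v0) (fun _ => v0).
End PlaysType.
Arguments Plays {V}.

Definition cylset {V : finType} (v0 : V) (s : seq V) : set (Plays v0) :=
  [set pi : Plays v0 | forall i, (i < size s)%N -> (pi : nat -> V) i = nth v0 s i].

Definition cylinders {V : finType} (v0 : V) : set (set (Plays v0)) :=
  [set A | exists s : seq V, A = cylset v0 s].

Definition PlaySp {V : finType} (v0 : V) := g_sigma_algebraType (cylinders v0).

Definition trans {R : realType} {V : finType} (G : game V)
  (sigma1 sigma2 : strat V) (h : seq V) (x y : V) : R :=
  match owner G x with
  | Player1 => (sigma1 h x == y)%:R
  | Player2 => (sigma2 h x == y)%:R
  | Random => ratr (delta G x y)
  end.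

Fixpoint pathprob {R : realType} {V : finType} (G : game V)
  (sigma1 sigma2 : strat V) (h : seq V) (x : V) (rest : seq V) : R :=
  match rest with
  | [::] => 1
  | y :: rest' => trans G sigma1 sigma2 h x y * pathprob G sigma1 sigma2 (rcons h x) y rest'
  end.

Definition cylprob {R : realType} {V : finType} (G : game V)
  (sigma1 sigma2 : strat V) (v : V) (s : seq V) : R :=
  match s with
  | [::] => 1
  | x :: rest => (x == v)%:R * pathprob G sigma1 sigma2 [::] x rest
  end.

(* P is the probability measure on plays induced by (sigma1, sigma2) and
   the initial vertex v (it is uniquely determined by its values on
   cylinders, and exists by the Ionescu-Tulcea theorem). *)
Definition induced_measure {R : realType} {V : finType} (G : game V)
  (sigma1 sigma2 : strat V) (v : V) (P : probability (PlaySp v) R) : Prop :=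
  forall s : seq V, P (cylset v s) = (cylprob G sigma1 sigma2 v s)%:E.

Definition borel_objective {R : realType} {V : finType} (phi : (nat -> V) -> R) : Prop :=
  forall v0 : V, measurable_fun [set: PlaySp v0] (phi : PlaySp v0 -> R).

Definition bounded_objective {R : realType} {V : finType} (G : game V)
  (phi : (nat -> V) -> R) : Prop :=
  exists W : nat, forall pi, is_play G pi -> `|phi pi| <= W%:R.

Definition prefix_independent {R : realType} {V : finType} (G : game V)
  (phi : (nat -> V) -> R) : Prop :=
  forall (pi pi' : nat -> V) (i j : nat), is_play G pi -> is_play G pi' ->
    (forall n, pi (i + n)%N = pi' (j + n)%N) -> phi pi = phi pi'.

Definition measure_family (R : realType) (V : finType) :=
  forall (sigma1 sigma2 : strat V) (v : V), probability (PlaySp v) R.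

Definition game_value {R : realType} {V : finType} (G : game V)
  (P : measure_family R V) (phi : (nat -> V) -> R) (v : V) : \bar R :=
  ereal_sup [set ereal_inf [set (\int[P sigma1 sigma2 v]_x (phi x)%:E)%E
                              | sigma2 in is_strategy G Player2]
            | sigma1 in is_strategy G Player1].

Definition boundary {R : realType} {V : finType} (G : game V) (r : V -> R) (v : V) : Prop :=
  owner G v = Random /\ exists v', edge G v v' /\ r v' != r v.

Definition pclass {R : realType} {V : finType} (G : game V) (r : V -> R)
  (u : V) (c : R) : rat :=
  \sum_(v' | edge G u v' && (r v' == c)) delta G u v'.

Definition maxden {V : finType} (G : game V) : nat :=
  \max_(v | is_random G v) \max_(v' | edge G v v') `|denq (delta G v v')|%N.

From HB Require Import structures.
From mathcomp Require Import all_boot all_order all_algebra.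
From mathcomp Require Import all_classical all_reals all_analysis.
From mathcomp Require Import perm.
Import Order.TTheory GRing.Theory Num.Theory.
Local Open Scope classical_set_scope.
Local Open Scope ring_scope.

(* D is an integer because alpha clears the denominators of all the p_{i,j},
   so alpha (I - Q_B) is an integer matrix.  The classes are disjoint and
   delta(u_i) is a probability distribution, so every row of Q_B is
   nonnegative with sum at most 1; hence every row of alpha (I - Q_B) has
   absolute sum at most 2 alpha, and |det| is at most the product of the
   absolute row sums.  Finally each p_{i,j} is a sum of probabilities
   delta(u_i)(v), so its denominator divides prod_v den(delta(u_i)(v)) <= N^|V|;
   therefore alpha <= N^(|V| m), and m <= |V| as the u_i are distinct. *)

Lemma dvdn_denqE (x : rat) (d : nat) :
  (`|denq x| %| d)%N = (d%:R * x \is a Num.int).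
Proof.
apply/idP/idP => [/dvdnP[c ->]|/intrP[z dx]].
  rewrite natrM -mulrA [_%:R * x]mulrC.
  have -> : `|denq x|%:R = (denq x)%:~R :> rat by rewrite -absz_denq.
  by rewrite -numqE rpredM ?rpred_nat ?rpred_int.
have /(congr1 absz) : d%:Z * numq x = z * denq x.
  by apply: (@intr_inj rat); rewrite !intrM numqE -dx mulrA.
rewrite !abszM /= => dnum_eq.
have : (`|denq x| %| d * `|numq x|)%N by rewrite dnum_eq dvdn_mull.
by rewrite Gauss_dvdl // coprime_sym coprime_num_den.
Qed.

Lemma denq_sum_dvdn (I : finType) (P : pred I) (F : I -> rat) (d : nat) :
  (forall i, P i -> `|denq (F i)| %| d)%N -> (`|denq (\sum_(i | P i) F i)| %| d)%N.
Proof.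
move=> dF; rewrite dvdn_denqE mulr_sumr rpred_sum // => i Pi.
by rewrite -dvdn_denqE dF.
Qed.

Lemma det_mxOver (R : comPzRingType) (S : subringClosed R) n (A : 'M[R]_n) :
  A \is a mxOver S -> \det A \in S.
Proof.
move=> /mxOverP SA; apply: rpred_sum => s _.
by rewrite rpredM ?rpredX ?rpredN ?rpred1 // rpred_prod.
Qed.

Section DeterminantBounds.
Variables (R : numDomainType) (n : nat).

Lemma norm_det_le_prod_row_sum (A : 'M[R]_n) :
  `|\det A| <= \prod_i \sum_j `|A i j|.
Proof.
(* Permutations are among all functions 'I_n -> 'I_n, and summing the products
   over all functions factors as the product of the row sums. *)
pose F (f : {ffun 'I_n -> 'I_n}) := \prod_i `|A i (f i)|.
have F_ge0 f : 0 <= F f by rewrite prodr_ge0.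
have normE (s : 'S_n) : `|(-1) ^+ s * \prod_i A i (s i)| = F (pval s).
  rewrite normrM normrX normrN1 expr1n mul1r normr_prod.
  by apply: eq_bigr => i _; rewrite -pvalE.
pose perms := [set val s | s in [set: 'S_n]]%SET.
have -> : \det A = \sum_(s : 'S_n) (-1) ^+ s * \prod_i A i (s i) by [].
apply: le_trans (ler_norm_sum _ _ _) _.
rewrite (eq_bigr _ (fun s _ => normE s)).
have -> : \sum_(s : 'S_n) F (pval s) = \sum_(f in perms) F f.
  rewrite big_imset /=; last exact: in2W val_inj.
  by apply: eq_bigl => s; rewrite inE.
rewrite bigA_distr_bigA [X in _ <= X](bigID (mem perms)) /=.
by rewrite lerDl sumr_ge0 // => f _; apply: F_ge0.
Qed.

Lemma norm_det_scale_id_sub_le (a : R) (Q : 'M[R]_n) :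
  0 <= a -> (forall i j, 0 <= Q i j) -> (forall i, \sum_j Q i j <= 1) ->
  `|\det (a *: (1%:M - Q))| <= (2 * a) ^+ n.
Proof.
move=> a_ge0 Q_ge0 Q_row; apply: le_trans (norm_det_le_prod_row_sum _) _.
rewrite -[n in _ ^+ n]card_ord -prodr_const; apply: ler_prod => i _.
rewrite sumr_ge0 //=.
under eq_bigr => j _ do rewrite !mxE normrM ger0_norm //.
rewrite -mulr_sumr mulrC ler_wpM2r //.
have id_row : \sum_j `|(i == j)%:R : R| = 1.
  rewrite (bigD1 i) //= eqxx normr1 big1 ?addr0 // => j.
  by rewrite eq_sym => /negbTE ->; rewrite normr0.
have Q_row_norm : \sum_j `|Q i j| = \sum_j Q i j.
  by apply: eq_bigr => j _; rewrite ger0_norm.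
apply: le_trans (ler_sum _ (fun j _ => ler_normB _ _)) _.
by rewrite big_split /= id_row Q_row_norm -[2%:R]/(1 + 1) lerD2l.
Qed.

End DeterminantBounds.

Section ClassProbabilities.
Context {R : realType} {V : finType} {G : game V}.
Hypothesis wfG : wf_game G.

Section RandomVertex.
Context {u : V}.
Hypothesis u_random : owner G u = Random.

Lemma delta_ge0 v : 0 <= delta G u v.
Proof.
have [edge_gt0 [nonedge_eq0 _]] := wfG.2 u u_random.
by have [/edge_gt0/ltW | /nonedge_eq0 ->] := boolP (edge G u v).
Qed.

Lemma pclass_ge0 (r : V -> R) c : 0 <= pclass G r u c.
Proof. by rewrite sumr_ge0 // => v _; apply: delta_ge0. Qed.

Lemma sum_pclass_le1 (r : V -> R) {n} (c : 'I_n -> R) :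
  injective c -> \sum_j pclass G r u (c j) <= 1.
Proof.
move=> c_inj; rewrite -(wfG.2 u u_random).2.2.
under eq_bigr => j _ do rewrite /pclass big_mkcondr /=.
rewrite exchange_big /=; apply: ler_sum => v _.
(* The classes [c j] are disjoint, so each successor [v] is counted at most once. *)
have [j rv_cj | r_out] := pickP (fun j => r v == c j); last first.
  by rewrite big1 ?delta_ge0 // => j _; rewrite r_out.
rewrite (bigD1 j) //= rv_cj big1 ?addr0 // => j' j'j.
by case: eqP => // /eqP; rewrite (eqP rv_cj) (inj_eq c_inj) eq_sym (negbTE j'j).
Qed.

Lemma denq_pclass_dvdn (r : V -> R) c :
  (`|denq (pclass G r u c)| %| \prod_v `|denq (delta G u v)|)%N.
Proof.
apply: denq_sum_dvdn => v _.
by rewrite (bigD1 v) //= dvdn_mulr.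
Qed.

Lemma denq_delta_le_maxden v : (`|denq (delta G u v)| <= maxden G)%N.
Proof.
have u_rand : is_random G u by rewrite /is_random u_random.
have edge_le w : edge G u w -> (`|denq (delta G u w)| <= maxden G)%N.
  move=> uw; apply: leq_trans (leq_bigmax_cond _ u_rand).
  exact: (leq_bigmax_cond (F := fun w => `|denq (delta G u w)|%N) _ uw).
have [/edge_le // | not_uv] := boolP (edge G u v).
have [w uw] := wfG.1 u.
rewrite ((wfG.2 u u_random).2.1 v not_uv).
by apply: leq_trans (edge_le w uw); rewrite absz_gt0 denq_neq0.
Qed.

Lemma maxden_gt0 : (0 < maxden G)%N.
Proof. by apply: leq_trans (denq_delta_le_maxden u); rewrite absz_gt0 denq_neq0. Qed.

Lemma prod_denq_delta_le : (\prod_v `|denq (delta G u v)| <= maxden G ^ #|V|)%N.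
Proof.
by rewrite -prod_nat_const; apply: leq_prod => v _; apply: denq_delta_le_maxden.
Qed.

End RandomVertex.

Lemma lcm_denq_pclass_le (r : V -> R) {m k} (u : 'I_m -> V) (c : 'I_k -> R) :
  (forall i, owner G (u i) = Random) ->
  (\big[lcmn/1]_(i < m) \big[lcmn/1]_(j < k) `|denq (pclass G r (u i) (c j))|
     <= maxden G ^ (#|V| * m))%N.
Proof.
move=> u_random.
pose M := (\prod_(i < m) \prod_v `|denq (delta G (u i) v)|)%N.
have M_gt0 : (0 < M)%N.
  by rewrite prodn_gt0 // => i; rewrite prodn_gt0 // => v; rewrite absz_gt0 denq_neq0.
apply: leq_trans (dvdn_leq M_gt0 _) _.
  apply/dvdn_biglcmP => i _; apply/dvdn_biglcmP => j _.
  by apply: dvdn_trans (denq_pclass_dvdn _ _) _; rewrite /M (bigD1 i) //= dvdn_mulr.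
rewrite expnM -[m in (_ ^ m)%N]card_ord -prod_nat_const.
by apply: leq_prod => i _; apply: prod_denq_delta_le.
Qed.

End ClassProbabilities.

Lemma double_expn_le (a N m n : nat) :
  (0 < N)%N -> (m <= n)%N -> (a <= N ^ (n * m))%N ->
  ((2 * a) ^ m <= 2 ^ n * N ^ (n ^ 3))%N.
Proof.
move=> N_gt0 mn aN; rewrite expnMn leq_mul ?leq_pexp2l //.
have [-> | m_gt0] := posnP m; first by rewrite expn0 expn_gt0 N_gt0.
apply: leq_trans (_ : (N ^ (n * m)) ^ m <= _)%N; first by rewrite leq_exp2r.
rewrite -expnM leq_pexp2l // -mulnA (expnSr n 2) mulnC leq_mul2r.
by rewrite leq_mul ?orbT.
Qed.

Theorem proposition13 (R : realType) (V : finType) (G : game V)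
  (P : measure_family R V) (phi : (nat -> V) -> R) (r : V -> R)
  (k m : nat) (hmk : (m <= k)%N) (cv : 'I_k -> R) (u : 'I_m -> V) :
  wf_game G ->
  (* P is the family of probability measures induced by strategy pairs *)
  (forall sigma1 sigma2 v, induced_measure G sigma1 sigma2 v (P sigma1 sigma2 v)) ->
  (* phi is a bounded, prefix-independent, Borel objective *)
  borel_objective phi -> bounded_objective G phi -> prefix_independent G phi ->
  (* r = r* is the expected value vector *)
  (forall v, (r v)%:E = game_value G P phi v) ->
  (* C_j = {v | r v = cv j}, j < k, enumerate exactly the classes of r *)
  injective cv ->
  (forall v, exists j, r v = cv j) ->
  (forall j, exists v, r v = cv j) ->
  (* exactly the first m classes contain boundary vertices, m >= 1 *)
  (0 < m)%N ->
  (forall j : 'I_k, (j < m)%N <-> exists v, r v = cv j /\ boundary G r v) ->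
  (* increasing values within C_1..C_m and within C_{m+1}..C_k *)
  (forall j j' : 'I_k, (j < j')%N -> ((j' < m)%N || (m <= j)%N) -> cv j < cv j') ->
  (* u_i is a boundary vertex of C_i *)
  (forall i : 'I_m, boundary G r (u i) /\ r (u i) = cv (widen_ord hmk i)) ->
  let p := fun (i : 'I_m) (j : 'I_k) => pclass G r (u i) (cv j) in
  let QB : 'M[rat]_m := \matrix_(i, j) p i (widen_ord hmk j) in
  let alpha : nat := \big[lcmn/1%N]_(i < m) \big[lcmn/1%N]_(j < k) `|denq (p i j)|%N in
  let D : rat := \det (alpha%:R *: (1%:M - QB)) in
  let N := maxden G in
  (exists z : int, D = z%:~R) /\
  `|D| <= ((2 * alpha) ^ m)%:R /\
  ((2 * alpha) ^ m <= 2 ^ #|V| * N ^ (#|V| ^ 3))%N.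
Proof.
move=> wfG _ _ _ _ _ cv_inj _ _ m_gt0 _ _ u_class p QB alpha D N.
have u_random i : owner G (u i) = Random by case: (u_class i) => -[].
have cvB_inj : injective (cv \o widen_ord hmk).
  by move=> i j /cv_inj /(congr1 val) /= ij; apply: val_inj.
have u_inj : injective u.
  by move=> i j uij; apply: cvB_inj; rewrite /= -(u_class i).2 -(u_class j).2 uij.
have alpha_clears i j : (`|denq (p i j)| %| alpha)%N.
  by apply: (biglcmn_sup i) => //; apply: (biglcmn_sup j).
split.
  apply/intrP/det_mxOver/mxOverP => i j; rewrite !mxE mulrBr rpredB //.
    by rewrite rpredM ?rpred_nat.
  by rewrite -dvdn_denqE.
split.
  rewrite natrX natrM norm_det_scale_id_sub_le // => [i j | i].
    by rewrite mxE (pclass_ge0 wfG (u_random i)).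
  under eq_bigr do rewrite mxE.
  exact: (sum_pclass_le1 wfG (u_random i) r _ cvB_inj).
apply: double_expn_le; first exact: (maxden_gt0 wfG (u_random (Ordinal m_gt0))).
  by rewrite -[m]card_ord; apply: leq_card u_inj.
exact: (lcm_denq_pclass_le wfG r u cv u_random).
Qed.
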